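(* Let $n\ge 1$, $h=1/n$, and for $0\le i\le n$ let $\tau_i=-2\sin\frac{i\pi}{2n}$ and $\sigma_i=2\big(2+\cos\frac{i\pi}{n}\big)$. Let $\bar A,\bar D\in\mathbb{R}^{(n+1)\times(n+1)}$ be tridiagonal: $\bar A$ has diagonal $(1,2,\dots,2,1)$ and off-diagonal entries $-1$; $\bar D$ has diagonal $(2,4,\dots,4,2)$ and off-diagonal entries $1$. Let $\bar B\in\mathbb{R}^{n\times(n+1)}$ have entries $\bar B_{k,k}=-1$, $\bar B_{k,k+1}=1$ ($1\le k\le n$), other entries zero. Let $\nu_0=\nu_n=\frac1{\sqrt2}$, $\nu_j=1$ for $1\le j\le n-1$. For $0\le j\le n$ let $\bar{\bm s}_j=\nu_j\big(\sin\frac{j\pi}{2n},\sin\frac{3j\pi}{2n},\dots,\sin\frac{(2n-1)j\pi}{2n}\big)^{\mathsf T}\in\mathbb{R}^n$ (so $\bar{\bm s}_0=\bm 0$) and $\tilde{\bm c}_j=\nu_j\big(1,\cos\frac{j\pi}{n},\dots,\cos\frac{(n-1)j\pi}{n},(-1)^j\big)^{\mathsf T}\in\mathbb{R}^{n+1}$. Consider the discrete eigenvalue problem: find $\lambda\in\mathbb{R}$ and $(U,V)\in\mathbb{R}^{n\times(n+1)}\times\mathbb{R}^{(n+1)\times n}$, $(U,V)\ne(0,0)$, with $$U\bar A-\bar BV\bar B=\tfrac{h^2}{6}\lambda\,U\bar D,\qquad -\bar B^{\mathsf T}U\bar B^{\mathsf T}+\bar AV=\tfrac{h^2}{6}\lambda\,\bar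 DV.$$ Then this problem has the following $2n(n+1)$ eigen-solutions, whose eigenvectors $(U,V)$ form a basis of $\mathbb{R}^{n\times(n+1)}\times\mathbb{R}^{(n+1)\times n}$ (a complete eigen-decomposition): (i) $n^2$ eigen-solutions satisfying the discrete divergence-free constraint $\bar B^{\mathsf T}U\bar D+\bar DV\bar B=0$: $$\lambda_{i,j}=\frac{6}{h^2}\Big(\frac{\tau_i^2}{\sigma_i}+\frac{\tau_j^2}{\sigma_j}\Big),\quad U_{i,j}=\tau_j\sigma_i\,\bar{\bm s}_i\tilde{\bm c}_j^{\mathsf T},\quad V_{i,j}=-\tau_i\sigma_j\,\tilde{\bm c}_i\bar{\bm s}_j^{\mathsf T},\qquad 1\le i,j\le n;$$ (ii) $(n+1)^2-1$ (discrete curl-free) eigen-solutions with eigenvalue $0$: $$\lambda=0,\quad U^0_{i,j}=\tau_i\,\bar{\bm s}_i\tilde{\bm c}_j^{\mathsf T},\quad V^0_{i,j}=\tau_j\,\tilde{\bm c}_i\bar{\bm s}_j^{\mathsf T},\qquad 0\le i,j\le n,\ (i,j)\ne(0,0).$$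
   Context: This is the algebraic form of the lowest-order rectangular Nédélec edge-element discretization of the Maxwell eigenvalue problem $\mathrm{curl}\,\mathrm{rot}\,\bm u=\lambda\bm u$ on $[0,1]^2$ with natural boundary conditions $\mathrm{rot}\,\bm u=0$, $\bm u\cdot\bm n=0$, on a uniform $n\times n$ mesh. For column vectors $\bm a,\bm b$, $\bm a\bm b^{\mathsf T}$ denotes the outer product (written $\bm a\otimes\bm b^{\mathsf T}$ in the paper). *)

From HB Require Import structures.
From mathcomp Require Import all_boot all_order all_algebra.
From mathcomp Require Import all_classical all_reals all_analysis.
Set Implicit Arguments. Unset Strict Implicit. Unset Printing Implicit Defensive.
Import Order.TTheory GRing.Theory Num.Theory.
Local Open Scope ring_scope.

Section Defs.
Variable R : realType.

(* All indices are 0-based below; the paper's rows/columns 1..m become 0..m-1. *)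

Definition hh (n : nat) : R := (n%:R)^-1.

Definition tau (n i : nat) : R := - 2 * sin (i%:R * pi / (2 * n%:R)).
Definition sigma (n i : nat) : R := 2 * (2 + cos (i%:R * pi / n%:R)).
Definition nu (n j : nat) : R :=
  if (j == 0)%N || (j == n)%N then (Num.sqrt (2 : R))^-1 else 1.

Definition Abar (n : nat) : 'M[R]_(n.+1) :=
  \matrix_(k, l)
    if k == l then (if ((k : nat) == 0)%N || ((k : nat) == n)%N then 1 else 2)
    else if ((k : nat).+1 == l)%N || ((l : nat).+1 == k)%N then -1 else 0.

Definition Dbar (n : nat) : 'M[R]_(n.+1) :=
  \matrix_(k, l)
    if k == l then (if ((k : nat) == 0)%N || ((k : nat) == n)%N then 2 else 4)
    else if ((k : nat).+1 == l)%N || ((l : nat).+1 == k)%N then 1 else 0.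

Definition Bbar (n : nat) : 'M[R]_(n, n.+1) :=
  \matrix_(k, l)
    if (l : nat) == k then -1 else if (l : nat) == (k : nat).+1 then 1 else 0.

Definition sbar (n j k : nat) : R :=
  nu n j * sin ((2 * k + 1)%:R * j%:R * pi / (2 * n%:R)).
Definition ctilde (n j k : nat) : R :=
  nu n j * cos (k%:R * j%:R * pi / n%:R).

Definition sc (n i j : nat) : 'M[R]_(n, n.+1) :=
  \matrix_(k, l) (sbar n i k * ctilde n j l).
Definition cs (n i j : nat) : 'M[R]_(n.+1, n) :=
  \matrix_(k, l) (ctilde n i k * sbar n j l).

Definition eigensolution (n : nat) (lam : R)
    (U : 'M[R]_(n, n.+1)) (V : 'M[R]_(n.+1, n)) : Prop :=
  (U, V) <> (0, 0) /\
  U *m Abar n - Bbar n *m V *m Bbar n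
    = ((hh n) ^+ 2 / 6 * lam) *: (U *m Dbar n) /\
  - ((Bbar n)^T *m U *m (Bbar n)^T) + Abar n *m V
    = ((hh n) ^+ 2 / 6 * lam) *: (Dbar n *m V).

Definition div_free (n : nat) (U : 'M[R]_(n, n.+1)) (V : 'M[R]_(n.+1, n)) :=
  (Bbar n)^T *m U *m Dbar n + Dbar n *m V *m Bbar n = 0.

(* family (i), paper indices i,j in 1..n *)
Definition lam1 (n i j : nat) : R :=
  6 / (hh n) ^+ 2 * ((tau n i) ^+ 2 / sigma n i + (tau n j) ^+ 2 / sigma n j).
Definition U1 (n i j : nat) : 'M[R]_(n, n.+1) := (tau n j * sigma n i) *: sc n i j.
Definition V1 (n i j : nat) : 'M[R]_(n.+1, n) := (- (tau n i * sigma n j)) *: cs n i j.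

(* family (ii), paper indices 0 <= i,j <= n, (i,j) <> (0,0) *)
Definition U0 (n i j : nat) : 'M[R]_(n, n.+1) := tau n i *: sc n i j.
Definition V0 (n i j : nat) : 'M[R]_(n.+1, n) := tau n j *: cs n i j.

End Defs.

From Pilot Require Import Defs.
From mathcomp Require Import all_boot all_order all_algebra.
From mathcomp Require Import all_classical all_reals all_analysis.
From mathcomp Require Import ring lra zify.
Set Implicit Arguments.
Unset Strict Implicit.
Unset Printing Implicit Defensive.
Import Order.TTheory GRing.Theory Num.Theory.
Local Open Scope ring_scope.

(* Everything separates into one-dimensional modes: the cosine
   vectors c_j and the shifted sine vectors s_j satisfy
     Bbar c_j = tau_j s_j,   Bbar^T s_j = (tau_j / sigma_j) Dbar c_j,
     Abar c_j = (tau_j^2 / sigma_j) Dbar c_j,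
   so for U = p s_i c_j^T and V = q c_i s_j^T both matrix equations reduce to
   scalar equations in the amplitudes p and q.  For completeness, the c_j are
   generalized eigenvectors of the symmetric pair (Abar, Dbar) with pairwise
   distinct eigenvalues, hence Dbar-orthogonal, and the s_j (j >= 1) are then
   orthogonal; so the matrices C, S with rows c_j, s_j are invertible.  Writing
   U = S^T Z C and V = C^T W S, the basis property becomes, entrywise, a 2x2
   linear system with determinant tau_j^2 sigma_i + tau_i^2 sigma_j > 0. *)

Lemma natrS_mul (R : pzSemiRingType) k (x : R) : k.+1%:R * x = k%:R * x + x.
Proof. by rewrite -natr1 mulrDl mul1r. Qed.

Lemma is_diag_unitmx (F : fieldType) m (G : 'M[F]_m) :
  is_diag_mx G -> (forall i, G i i != 0) -> G \in unitmx.
Proof.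
move=> /is_diag_mx_is_trig G_trig G_neq0.
by rewrite unitmxE det_trig // unitfE; apply/prodf_neq0.
Qed.

Lemma mulmx_unit_eq0 (R : comUnitRingType) m k (P : 'M[R]_m) (Q : 'M[R]_k) (Z : 'M[R]_(m, k)) :
  P \in unitmx -> Q \in unitmx -> P *m Z *m Q = 0 -> Z = 0.
Proof.
move=> P_unit Q_unit PZQ0.
by rewrite -(mulKmx P_unit Z) -(mulmxK Q_unit (P *m Z)) PZQ0 mul0mx mulmx0.
Qed.

Lemma trmx_mul_sym (R : comPzSemiRingType) m (M : 'M[R]_m) (x : 'cV[R]_m) :
  M^T = M -> x^T *m M = (M *m x)^T.
Proof. by move=> M_sym; rewrite trmx_mul M_sym. Qed.

Lemma gen_eigvec_orth (F : fieldType) m (A D : 'M[F]_m) (x y : 'cV[F]_m) (mu nu : F) :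
  A^T = A -> D^T = D -> A *m x = mu *: (D *m x) -> A *m y = nu *: (D *m y) ->
  mu != nu -> x^T *m D *m y = 0.
Proof.
move=> A_sym D_sym Ax Ay mu_nu.
have e_nu : x^T *m A *m y = nu *: (x^T *m D *m y).
  by rewrite -mulmxA Ay -scalemxAr mulmxA.
have e_mu : x^T *m A *m y = mu *: (x^T *m D *m y).
  by rewrite trmx_mul_sym // Ax linearZ /= trmx_mul D_sym -scalemxAl.
move/eqP: e_nu; rewrite e_mu -subr_eq0 -scalerBl scaler_eq0 subr_eq0.
by rewrite (negPf mu_nu) => /eqP.
Qed.

Lemma mxE_mul_tr (R : pzSemiRingType) m m' p (P : 'M[R]_(m, p)) (Q : 'M[R]_(m', p)) j k :
  (P *m Q^T) j k = (row j P *m (row k Q)^T) 0 0.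
Proof. by rewrite !mxE; apply: eq_bigr => l _; rewrite !mxE. Qed.

Lemma mulmx_sum_outer (R : comPzRingType) m p q r (P : 'M[R]_(m, p)) (Z : 'M[R]_(m, q))
    (Q : 'M[R]_(q, r)) :
  P^T *m Z *m Q = \sum_i \sum_j Z i j *: ((row i P)^T *m row j Q).
Proof.
apply/matrixP => k l; rewrite mxE summxE.
under eq_bigr => j _ do rewrite mxE big_distrl /=.
under [RHS]eq_bigr => i _ do rewrite summxE.
rewrite exchange_big /=; apply: eq_bigr => j _; apply: eq_bigr => i _.
by rewrite !mxE big_ord1 !mxE mulrCA mulrA.
Qed.

Lemma lin2_eq0 (R : idomainType) (a b c d x y : R) :
  a * d - b * c != 0 -> x * a + y * b = 0 -> x * c + y * d = 0 -> x = 0 /\ y = 0.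
Proof.
move=> det_neq0 e1 e2.
have ex : x * (a * d - b * c) = d * (x * a + y * b) - b * (x * c + y * d) by ring.
have ey : y * (a * d - b * c) = a * (x * c + y * d) - c * (x * a + y * b) by ring.
rewrite e1 e2 !mulr0 subrr in ex ey.
by move/eqP: ex; move/eqP: ey; rewrite !mulf_eq0 (negPf det_neq0) !orbF => /eqP-> /eqP->.
Qed.

Lemma sum_delta (R : nmodType) m p (F : nat -> R) :
  \sum_(l < m) (if (l : nat) == p then F l else 0) = if (p < m)%N then F p else 0.
Proof. by rewrite -big_mkcond big_ord1_eq. Qed.

Lemma diag_form_gt0 (R : realDomainType) m (w : 'rV[R]_m) (x : 'cV[R]_m) k :
  (forall l, 0 <= w 0 l) -> 0 < w 0 k -> x k 0 != 0 ->
  0 < (x^T *m diag_mx w *m x) 0 0.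
Proof.
move=> w_ge0 wk_gt0 xk_neq0.
have term l : (x^T *m diag_mx w) 0 l * x l 0 = w 0 l * x l 0 ^+ 2.
  by rewrite mul_mx_diag !mxE mulrAC -expr2 mulrC.
rewrite mxE (bigD1 k) //= term ltr_pwDl //.
  by rewrite mulr_gt0 // exprn_even_gt0.
by apply: sumr_ge0 => l _; rewrite term mulr_ge0 ?sqr_ge0.
Qed.

Section Trig.
Variable R : realType.

Lemma sin_natpi (j : nat) : sin (j%:R * pi) = 0 :> R.
Proof.
elim: j => [|j IH]; first by rewrite mul0r sin0.
by rewrite -natr1 mulrDl mul1r sinDpi IH oppr0.
Qed.

Lemma cos_natpi (j : nat) : cos (j%:R * pi) = (-1) ^+ j :> R.
Proof.
elim: j => [|j IH]; first by rewrite mul0r cos0.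
by rewrite -natr1 mulrDl mul1r cosDpi IH exprS mulN1r.
Qed.

Lemma cosD_cosB (x t : R) : cos (x + t) - cos (x - t) = - 2 * sin x * sin t.
Proof. rewrite cosB cosD; ring. Qed.

Lemma sinB_sinD (x t : R) : sin (x - t) - sin (x + t) = - 2 * cos x * sin t.
Proof. rewrite sinB sinD; ring. Qed.

Lemma cosB_cosD (x t : R) : cos (x - t) + cos (x + t) = 2 * cos t * cos x.
Proof. rewrite cosB cosD; ring. Qed.

Lemma cos_double (t : R) : cos (t + t) = 1 - 2 * sin t ^+ 2.
Proof. rewrite cosD -!expr2 cos2sin2; ring. Qed.

Lemma add2_cos_gt0 (x : R) : 0 < 2 + cos x.
Proof. by have := cos_geN1 x; lra. Qed.

End Trig.

Section Tridiagonal.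
Variable R : pzSemiRingType.

Definition tridiag {m} (d : nat -> R) (e : R) : 'M[R]_m :=
  \matrix_(k, l) if k == l then d k
                 else if ((k : nat).+1 == l)%N || ((l : nat).+1 == k)%N then e else 0.

Lemma tridiag_mulE m d e (f : nat -> R) (l : 'I_m.+1) :
  (tridiag d e *m \col_k f k) l 0 =
  d l * f l + e * ((if (l : nat) is l'.+1 then f l' else 0)
                   + (if (l < m)%N then f l.+1 else 0)).
Proof.
rewrite mxE.
have entry (k : 'I_m.+1) : tridiag d e l k * (\col_k f k) k 0
    = d l * (if (k : nat) == l then f k else 0)
      + e * ((if (k.+1 == l)%N then f k else 0) + (if (k : nat) == l.+1 then f k else 0)).
  rewrite !mxE -val_eqE /=.
  by case: eqVneq => [->|?]; repeat (case: eqVneq => ? /=);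
    rewrite ?(addr0, add0r, mulr0, mul0r) //; lia.
rewrite (eq_bigr _ (fun k _ => entry k)) big_split /= -!mulr_sumr big_split /=.
rewrite !sum_delta ltn_ord ltnS; congr (_ + _ * (_ + _)).
clear entry; case: l => [[|l] //= l_lt]; first by rewrite big1.
under eq_bigr => k _ do rewrite eqSS.
by rewrite sum_delta ltnW.
Qed.
End Tridiagonal.

Section DiscreteOperators.
Variables (R : realType) (n : nat).

Local Notation A := (Abar R n).
Local Notation B := (Bbar R n).
Local Notation D := (Dbar R n).

Lemma AbarE : A = tridiag (fun k => if (k == 0)%N || (k == n)%N then 1 else 2) (-1).
Proof. by []. Qed.

Lemma DbarE : D = tridiag (fun k => if (k == 0)%N || (k == n)%N then 2 else 4) 1.
Proof. by []. Qed.

Lemma Abar_sym : A^T = A.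
Proof.
by apply/matrixP => k l; rewrite !mxE; case: eqVneq => [->|_] //; rewrite orbC.
Qed.

Lemma Dbar_sym : D^T = D.
Proof.
by apply/matrixP => k l; rewrite !mxE; case: eqVneq => [->|_] //; rewrite orbC.
Qed.

Lemma Abar_add_Dbar :
  A + D = diag_mx (\row_k (if ((k : nat) == 0)%N || ((k : nat) == n)%N then 3 else 6)).
Proof.
apply/matrixP => k l; rewrite !mxE; case: eqVneq => [->|_].
  by rewrite mulr1n; case: ifP => _; lra.
by rewrite mulr0n; case: ifP => _; rewrite ?addNr ?addr0.
Qed.

Lemma Bbar_mulE (f : nat -> R) (k : 'I_n) :
  (B *m \col_l f l) k 0 = f k.+1 - f k.
Proof.
rewrite mxE.
have entry (l : 'I_n.+1) : B k l * (\col_l f l) l 0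
    = (if (l : nat) == k.+1 then f l else 0) - (if (l : nat) == k then f l else 0).
  rewrite !mxE; by repeat (case: eqVneq => ? /=); rewrite ?(subr0, sub0r, mul1r, mulN1r, mul0r) //; lia.
by rewrite (eq_bigr _ (fun l _ => entry l)) sumrB !sum_delta !ltnS ltn_ord (ltnW (ltn_ord k)).
Qed.

Lemma trBbar_mulE (g : nat -> R) (l : 'I_n.+1) :
  (B^T *m \col_k g k) l 0 =
  (if (l : nat) is l'.+1 then g l' else 0) - (if (l < n)%N then g l else 0).
Proof.
rewrite mxE.
have entry (k : 'I_n) : B^T l k * (\col_k g k) k 0
    = (if (k.+1 == l)%N then g k else 0) - (if (k : nat) == l then g k else 0).
  rewrite !mxE; by repeat (case: eqVneq => ? /=); rewrite ?(subr0, sub0r, mul1r, mulN1r, mul0r) //; lia.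
rewrite (eq_bigr _ (fun k _ => entry k)) sumrB sum_delta; congr (_ - _).
clear entry; case: l => [[|l] //= l_lt]; first by rewrite big1.
by under eq_bigr => k _ do rewrite eqSS; rewrite sum_delta -ltnS l_lt.
Qed.

End DiscreteOperators.

(** * One-dimensional modes *)

Section Modes.
Variables (R : realType) (n : nat).
Hypothesis n_gt0 : (0 < n)%N.

Local Notation A := (Abar R n).
Local Notation B := (Bbar R n).
Local Notation D := (Dbar R n).
Local Notation tau := (tau R n).
Local Notation sigma := (sigma R n).
Local Notation nu := (nu R n).

Definition angle (j : nat) : R := j%:R * pi / n%:R.
Definition cvec (j : nat) : 'cV[R]_n.+1 := \col_k ctilde R n j k.
Definition svec (j : nat) : 'cV[R]_n := \col_k sbar R n j k.
Definition mu (j : nat) : R := tau j ^+ 2 / sigma j.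

Lemma natn_neq0 : n%:R != 0 :> R.
Proof. by rewrite pnatr_eq0 -lt0n. Qed.

Lemma natn_angle j : n%:R * angle j = j%:R * pi.
Proof. by rewrite /angle mulrCA divff ?mulr1 ?natn_neq0. Qed.

Lemma ctildeE j k : ctilde R n j k = nu j * cos (k%:R * angle j).
Proof. by rewrite /ctilde /angle !mulrA. Qed.

Lemma sbarE j k : sbar R n j k = nu j * sin (k%:R * angle j + angle j / 2).
Proof.
rewrite /sbar /angle natrD natrM; congr (_ * sin _).
by field; rewrite natn_neq0.
Qed.

Lemma tauE j : tau j = - 2 * sin (angle j / 2).
Proof. by rewrite /Defs.tau /angle; congr (_ * sin _); field; rewrite natn_neq0. Qed.

Lemma sigmaE j : sigma j = 2 * (2 + cos (angle j)).
Proof. by []. Qed.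

Lemma sigma_gt0 j : 0 < sigma j.
Proof. by rewrite sigmaE mulr_gt0 ?add2_cos_gt0. Qed.

Lemma cos_angle j : cos (angle j) = 1 - 2 * sin (angle j / 2) ^+ 2.
Proof. by rewrite -cos_double -splitr. Qed.

Lemma angle_itv j : (j <= n)%N -> angle j \in `[0, pi].
Proof.
move=> j_le_n; rewrite in_itv /= divr_ge0 ?mulr_ge0 ?pi_ge0 //=.
by rewrite ler_pdivrMr ?ltr0n // mulrC ler_wpM2l ?pi_ge0 ?ler_nat.
Qed.

Lemma sin_half_angle_gt0 i : (1 <= i <= n)%N -> 0 < sin (angle i / 2).
Proof.
case/andP => i_gt0 i_le_n; apply: sin_gt0_pi.
have := angle_itv i_le_n; rewrite in_itv /= => /andP [_ le_pi].
have : 0 < angle i by rewrite divr_gt0 ?mulr_gt0 ?pi_gt0 ?ltr0n.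
have := pi_gt0 R; lra.
Qed.

Lemma Bbar_cvec j : B *m cvec j = tau j *: svec j.
Proof.
apply/matrixP => k z; rewrite ord1 Bbar_mulE !mxE !ctildeE sbarE tauE.
set a := angle j; set x := k%:R * a + a / 2.
have -> : k.+1%:R * a = x + a / 2 by rewrite natrS_mul /x -addrA -splitr.
have -> : k%:R * a = x - a / 2 by rewrite addrK.
by rewrite -mulrBr cosD_cosB; ring.
Qed.

Lemma trBbar_svec j : B^T *m svec j = (tau j / sigma j) *: (D *m cvec j).
Proof.
apply/matrixP => l z; rewrite ord1 trBbar_mulE mxE DbarE tridiag_mulE.
rewrite tauE sigmaE.
have cos_neq0 := lt0r_neq0 (add2_cos_gt0 (angle j)).
set a := angle j; set b := a / 2; rewrite -/a in cos_neq0.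
have a2b : a = b + b by rewrite /b -splitr.
case: l => [[|l] /= l_lt]; rewrite !sbarE !ctildeE.
  by rewrite n_gt0 !mul0r !mul1r !add0r cos0; field.
have [l_lt_n | l_eq_n] : (l.+1 < n)%N \/ l.+1 = n by lia.
- set w := l.+1%:R * a.
  have -> : l%:R * a + b = w - b by rewrite /w natrS_mul a2b; ring.
  have -> : l.+2%:R * a = w + a by rewrite natrS_mul.
  have -> : l%:R * a = w - a by rewrite /w natrS_mul addrK.
  rewrite l_lt_n (ltn_eqF l_lt_n) -mulrBr sinB_sinD -mulrDr cosB_cosD a2b cos_double; field.
  by rewrite -cos_double -a2b.
- have -> : l%:R * a = j%:R * pi - a by rewrite -natn_angle -l_eq_n natrS_mul addrK.
  have -> : l.+1%:R * a = j%:R * pi by rewrite l_eq_n natn_angle.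
  rewrite l_eq_n ltnn eqxx subr0 addr0.
  have -> : j%:R * pi - a + b = j%:R * pi - b by rewrite a2b; ring.
  by rewrite sinB cosB sin_natpi cos_natpi; field.
Qed.

Lemma Abar_cvec j : A *m cvec j = mu j *: (D *m cvec j).
Proof.
apply/matrixP => l z; rewrite ord1 [RHS]mxE AbarE DbarE !tridiag_mulE.
rewrite /mu tauE sigmaE.
have cos_neq0 := lt0r_neq0 (add2_cos_gt0 (angle j)); rewrite cos_angle in cos_neq0.
have := cos_angle j; set a := angle j; set b := a / 2 => cos_a.
case: l => [[|l] /= l_lt]; rewrite !ctildeE.
  by rewrite n_gt0 !mul0r !mul1r !add0r cos0 cos_a; field.
have [l_lt_n | l_eq_n] : (l.+1 < n)%N \/ l.+1 = n by lia.
- set w := l.+1%:R * a.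
  have -> : l.+2%:R * a = w + a by rewrite natrS_mul.
  have -> : l%:R * a = w - a by rewrite /w natrS_mul addrK.
  by rewrite l_lt_n (ltn_eqF l_lt_n) -mulrDr cosB_cosD cos_a; field.
- have -> : l%:R * a = j%:R * pi - a by rewrite -natn_angle -l_eq_n natrS_mul addrK.
  have -> : l.+1%:R * a = j%:R * pi by rewrite l_eq_n natn_angle.
  by rewrite l_eq_n ltnn eqxx addr0 cosB sin_natpi cos_natpi cos_a; field.
Qed.

Lemma muE j : mu j = (1 - cos (angle j)) / (2 + cos (angle j)).
Proof.
have cos_neq0 := lt0r_neq0 (add2_cos_gt0 (angle j)).
by rewrite /mu tauE sigmaE cos_angle; rewrite cos_angle in cos_neq0; field.
Qed.

Lemma mu_inj j k : (j <= n)%N -> (k <= n)%N -> mu j = mu k -> j = k.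
Proof.
move=> j_le_n k_le_n; rewrite !muE.
have cj_gt0 := add2_cos_gt0 (angle j); have ck_gt0 := add2_cos_gt0 (angle k).
move/eqP; rewrite eqr_div ?lt0r_neq0 // => /eqP cross.
have cos_eq : cos (angle j) = cos (angle k).
  have : 3 * (cos (angle k) - cos (angle j))
         = (1 - cos (angle j)) * (2 + cos (angle k))
           - (1 - cos (angle k)) * (2 + cos (angle j)) by ring.
  by rewrite cross subrr => /eqP; rewrite mulf_eq0 pnatr_eq0 subr_eq0 /= => /eqP.
move/(cos_inj (angle_itv j_le_n) (angle_itv k_le_n)): cos_eq.
rewrite /angle => /(congr1 (fun x => x * n%:R / pi)).
rewrite !divfK ?natn_neq0 // !mulfK ?gt_eqF ?pi_gt0 // => /eqP.
by rewrite eqr_nat => /eqP.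
Qed.

(** * Separated eigen-solutions *)

Lemma sc_outer i j : sc R n i j = svec i *m (cvec j)^T.
Proof. by apply/matrixP => k l; rewrite !mxE big_ord1 !mxE. Qed.

Lemma cs_outer i j : cs R n i j = cvec i *m (svec j)^T.
Proof. by apply/matrixP => k l; rewrite !mxE big_ord1 !mxE. Qed.

Lemma trcvec_Abar j : (cvec j)^T *m A = mu j *: ((cvec j)^T *m D).
Proof. by rewrite trmx_mul_sym ?Abar_sym // Abar_cvec linearZ /= trmx_mul Dbar_sym. Qed.

Lemma trcvec_trBbar j : (cvec j)^T *m B^T = tau j *: (svec j)^T.
Proof. by rewrite -trmx_mul Bbar_cvec linearZ. Qed.

Lemma trsvec_Bbar j : (svec j)^T *m B = (tau j / sigma j) *: ((cvec j)^T *m D).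
Proof. by rewrite -[B]trmxK -trmx_mul trBbar_svec linearZ /= trmx_mul Dbar_sym. Qed.

Lemma sc_Abar i j : sc R n i j *m A = mu j *: (sc R n i j *m D).
Proof. by rewrite sc_outer -!mulmxA trcvec_Abar -scalemxAr. Qed.

Lemma Bbar_cs_Bbar i j :
  B *m cs R n i j *m B = (tau i * (tau j / sigma j)) *: (sc R n i j *m D).
Proof.
by rewrite cs_outer sc_outer mulmxA Bbar_cvec -mulmxA trsvec_Bbar
  -scalemxAl -scalemxAr scalerA mulmxA.
Qed.

Lemma trBbar_sc_trBbar i j :
  B^T *m sc R n i j *m B^T = (tau i / sigma i * tau j) *: (D *m cs R n i j).
Proof.
by rewrite sc_outer cs_outer mulmxA trBbar_svec -mulmxA trcvec_trBbar
  -scalemxAl -scalemxAr scalerA mulmxA.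
Qed.

Lemma Abar_cs i j : A *m cs R n i j = mu i *: (D *m cs R n i j).
Proof. by rewrite cs_outer !mulmxA Abar_cvec -scalemxAl. Qed.

Lemma trBbar_sc_Dbar i j :
  B^T *m sc R n i j *m D = (tau i / sigma i) *: (D *m cvec i *m ((cvec j)^T *m D)).
Proof. by rewrite sc_outer !mulmxA trBbar_svec -!scalemxAl -!mulmxA. Qed.

Lemma Dbar_cs_Bbar i j :
  D *m cs R n i j *m B = (tau j / sigma j) *: (D *m cvec i *m ((cvec j)^T *m D)).
Proof. by rewrite cs_outer -!mulmxA trsvec_Bbar -!scalemxAr. Qed.

Lemma nu_gt0 j : 0 < nu j.
Proof. by rewrite /Defs.nu; case: ifP => _; rewrite ?invr_gt0 ?sqrtr_gt0. Qed.

Lemma tau_neq0 i : (1 <= i <= n)%N -> tau i != 0.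
Proof. by move=> /sin_half_angle_gt0/gt_eqF s_neq0; rewrite tauE mulf_neq0 ?s_neq0. Qed.

Lemma sbar0_gt0 i : (1 <= i <= n)%N -> 0 < sbar R n i 0.
Proof.
by move=> /sin_half_angle_gt0 ?; rewrite sbarE mul0r add0r mulr_gt0 ?nu_gt0.
Qed.

Lemma ctilde0 j : ctilde R n j 0 = nu j.
Proof. by rewrite ctildeE mul0r cos0 mulr1. Qed.

Lemma sc_neq0 (p : R) i j : p != 0 -> (1 <= i <= n)%N -> p *: sc R n i j != 0.
Proof.
move=> p_neq0 /sbar0_gt0 s0_gt0; apply/negP => /eqP/matrixP/(_ (Ordinal n_gt0) ord0).
rewrite !mxE ctilde0 => /eqP.
by rewrite mulf_eq0 (negPf p_neq0) mulf_eq0 (gt_eqF s0_gt0) (gt_eqF (nu_gt0 j)).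
Qed.

Lemma cs_neq0 (q : R) i j : q != 0 -> (1 <= j <= n)%N -> q *: cs R n i j != 0.
Proof.
move=> q_neq0 /sbar0_gt0 s0_gt0; apply/negP => /eqP/matrixP/(_ ord0 (Ordinal n_gt0)).
rewrite !mxE ctilde0 => /eqP.
by rewrite mulf_eq0 (negPf q_neq0) mulf_eq0 (gt_eqF (nu_gt0 i)) (gt_eqF s0_gt0).
Qed.

Lemma outer_eigensolution i j (p q lam : R) :
  (p *: sc R n i j, q *: cs R n i j) <> (0, 0) ->
  p * mu j - q * (tau i * (tau j / sigma j)) = hh R n ^+ 2 / 6 * lam * p ->
  - (p * (tau i / sigma i * tau j)) + q * mu i = hh R n ^+ 2 / 6 * lam * q ->
  eigensolution lam (p *: sc R n i j) (q *: cs R n i j).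
Proof.
move=> UV_neq0 eqU eqV; split=> //; rewrite -!scalemxAr -!scalemxAl.
rewrite sc_Abar Bbar_cs_Bbar trBbar_sc_trBbar Abar_cs !scalerA -scalerBl eqU.
by rewrite -[X in X + _]scaleNr -scalerDl eqV.
Qed.

Lemma hh_neq0 : hh R n != 0.
Proof. by rewrite invr_neq0 ?natn_neq0. Qed.

Lemma div_free_eigensolution i j : (1 <= i <= n)%N -> (1 <= j <= n)%N ->
  eigensolution (lam1 R n i j) (U1 R n i j) (V1 R n i j)
  /\ div_free (U1 R n i j) (V1 R n i j).
Proof.
move=> i_range j_range.
have [si sj] := (lt0r_neq0 (sigma_gt0 i), lt0r_neq0 (sigma_gt0 j)).
have hh0 := hh_neq0.
rewrite /U1 /V1; split; last first.
  rewrite /div_free -!scalemxAr -!scalemxAl trBbar_sc_Dbar Dbar_cs_Bbar !scalerA.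
  by rewrite -scalerDl [X in X *: _](_ : _ = 0) ?scale0r //; field; rewrite si sj.
apply: outer_eigensolution; rewrite /lam1 /mu; try by field; rewrite ?si ?sj ?hh0.
case=> U_eq0 _; move: (sc_neq0 j (mulf_neq0 (tau_neq0 j_range) si) i_range).
by rewrite U_eq0 eqxx.
Qed.

Lemma zero_eigensolution i j : (i <= n)%N -> (j <= n)%N -> (i, j) <> (0%N, 0%N) ->
  eigensolution 0 (U0 R n i j) (V0 R n i j).
Proof.
move=> i_le_n j_le_n ij_neq0.
apply: outer_eigensolution; rewrite /mu ?mulr0 ?mul0r;
  try by field; rewrite lt0r_neq0 ?sigma_gt0.
case=> U_eq0 V_eq0.
have [i_range | i0] : (1 <= i <= n)%N \/ i = 0%N by lia.
  by move: (sc_neq0 j (tau_neq0 i_range) i_range); rewrite U_eq0 eqxx.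
have j_range : (1 <= j <= n)%N.
  by case: j ij_neq0 {U_eq0 V_eq0} j_le_n => [|j]; rewrite ?i0.
by move: (cs_neq0 i (tau_neq0 j_range) j_range); rewrite V_eq0 eqxx.
Qed.

(** * Completeness *)

Definition Cmx : 'M[R]_n.+1 := \matrix_(j, k) ctilde R n j k.
(* [sbar n 0] vanishes, so the rows of [Smx] are s_1, ..., s_n. *)
Definition Smx : 'M[R]_n := \matrix_(i, k) sbar R n i.+1 k.

Lemma row_Cmx j : row j Cmx = (cvec j)^T.
Proof. by apply/matrixP => ? ?; rewrite !mxE. Qed.

Lemma row_Smx i : row i Smx = (svec i.+1)^T.
Proof. by apply/matrixP => ? ?; rewrite !mxE. Qed.

Lemma cvec_Dorth j k : (j <= n)%N -> (k <= n)%N -> j != k ->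
  (cvec j)^T *m D *m cvec k = 0.
Proof.
move=> j_le_n k_le_n jk.
apply: (gen_eigvec_orth (Abar_sym _ _) (Dbar_sym _ _) (Abar_cvec j) (Abar_cvec k)).
by apply: contra jk => /eqP/(mu_inj j_le_n k_le_n)->.
Qed.

Lemma svec_orth i k : (1 <= i <= n)%N -> (1 <= k <= n)%N -> i != k ->
  (svec i)^T *m svec k = 0.
Proof.
move=> i_range k_range ik; apply: (scalerI (tau_neq0 i_range)).
rewrite scaler0 scalemxAl -linearZ /= -Bbar_cvec trmx_mul -mulmxA trBbar_svec.
by rewrite -scalemxAr mulmxA cvec_Dorth ?scaler0 //; case/andP: i_range; case/andP: k_range.
Qed.

Lemma Cmx_unit : Cmx \in unitmx.
Proof.
(* Abar + Dbar is diagonal and positive, and c_j^T (Abar + Dbar) c_k = (1 + mu_k) c_j^T Dbar c_k. *)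
suff : Cmx *m (A + D) *m Cmx^T \in unitmx by rewrite !unitmx_mul => /andP [/andP []].
apply: is_diag_unitmx => [|j].
  apply/is_diag_mxP => j k jk; rewrite mxE_mul_tr row_mul !row_Cmx trmxK.
  rewrite -mulmxA mulmxDl Abar_cvec -{2}(scale1r (D *m cvec k)) -scalerDl.
  by rewrite -scalemxAr mulmxA cvec_Dorth ?scaler0 ?mxE // -ltnS ltn_ord.
rewrite mxE_mul_tr row_mul row_Cmx trmxK Abar_add_Dbar gt_eqF //.
apply: (diag_form_gt0 (k := ord0)) => [l||]; rewrite !mxE ?ltr0n //.
  by case: ifP; rewrite ler0n.
by rewrite ctilde0 gt_eqF ?nu_gt0.
Qed.

Lemma Smx_unit : Smx \in unitmx.
Proof.
suff : Smx *m Smx^T \in unitmx by rewrite !unitmx_mul => /andP [].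
apply: is_diag_unitmx => [|i].
  apply/is_diag_mxP => i k ik.
  by rewrite mxE_mul_tr !row_Smx trmxK svec_orth ?mxE ?ltn_ord.
rewrite mxE_mul_tr row_Smx trmxK gt_eqF // -(mulmx1 (svec _)^T) -diag_const_mx.
apply: (diag_form_gt0 (k := Ordinal n_gt0)) => [l||]; rewrite !mxE ?ler01 ?ltr01 //.
by apply/lt0r_neq0/sbar0_gt0; rewrite ltn_ord.
Qed.

Definition coefU (a : 'I_n -> 'I_n -> R) (b : 'I_n.+1 -> 'I_n.+1 -> R) : 'M[R]_(n, n.+1) :=
  \matrix_(i, j) ((if unlift ord0 j is Some j' then a i j' * (tau j * sigma i.+1) else 0)
                  + b (lift ord0 i) j * tau i.+1).

Definition coefV (a : 'I_n -> 'I_n -> R) (b : 'I_n.+1 -> 'I_n.+1 -> R) : 'M[R]_(n.+1, n) :=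
  \matrix_(i, j) ((if unlift ord0 i is Some i' then a i' j * - (tau i * sigma j.+1) else 0)
                  + b i (lift ord0 j) * tau j.+1).

Lemma tau0 : tau 0 = 0.
Proof. by rewrite /Defs.tau !mul0r sin0 mulr0. Qed.

Lemma sumU_coefU a b :
  \sum_(i < n) \sum_(j < n) a i j *: U1 R n i.+1 j.+1
  + \sum_(i < n.+1) \sum_(j < n.+1 | (i, j) != (ord0, ord0)) b i j *: U0 R n i j
  = Smx^T *m coefU a b *m Cmx.
Proof.
rewrite mulmx_sum_outer.
under [RHS]eq_bigr => i _ do under eq_bigr => j _ do
  rewrite row_Smx row_Cmx trmxK -sc_outer mxE scalerDl.
under [RHS]eq_bigr => i _ do rewrite big_split /=.
rewrite big_split /=; congr (_ + _).
  apply: eq_bigr => i _; rewrite [RHS]big_ord_recl /= unlift_none scale0r add0r.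
  by apply: eq_bigr => j _; rewrite liftK /U1 scalerA.
rewrite big_ord_recl /= big1 ?add0r => [|j _]; last by rewrite /U0 tau0 scale0r scaler0.
apply: eq_bigr => i _; rewrite big_mkcond; apply: eq_bigr => j _.
by rewrite /U0 scalerA.
Qed.

Lemma sumV_coefV a b :
  \sum_(i < n) \sum_(j < n) a i j *: V1 R n i.+1 j.+1
  + \sum_(i < n.+1) \sum_(j < n.+1 | (i, j) != (ord0, ord0)) b i j *: V0 R n i j
  = Cmx^T *m coefV a b *m Smx.
Proof.
rewrite mulmx_sum_outer.
under [RHS]eq_bigr => i _ do under eq_bigr => j _ do
  rewrite row_Cmx row_Smx trmxK -cs_outer mxE scalerDl.
under [RHS]eq_bigr => i _ do rewrite big_split /=.
rewrite big_split /=; congr (_ + _).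
  rewrite [RHS]big_ord_recl /= [X in _ = X + _]big1 ?add0r => [|j _]; last first.
    by rewrite unlift_none scale0r.
  by apply: eq_bigr => i _; apply: eq_bigr => j _; rewrite liftK /V1 scalerA.
apply: eq_bigr => i _; rewrite big_mkcond big_ord_recl /=.
rewrite [X in X + _](_ : _ = 0) ?add0r; last by case: ifP => // _; rewrite /V0 tau0 scale0r scaler0.
apply: eq_bigr => j _.
have -> : (i, lift ord0 j) != (ord0, ord0) by rewrite xpair_eqE negb_and orbC.
by rewrite /V0 scalerA.
Qed.

Definition pair_det (i j : nat) : R := tau j ^+ 2 * sigma i + tau i ^+ 2 * sigma j.

Lemma pair_det_gt0 (i j : 'I_n) : 0 < pair_det i.+1 j.+1.
Proof.
have sqr_tau_gt0 (k : 'I_n) : 0 < tau k.+1 ^+ 2.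
  by rewrite exprn_even_gt0 // tau_neq0 ?ltn_ord.
by apply: addr_gt0; apply: mulr_gt0; rewrite ?sqr_tau_gt0 ?sigma_gt0.
Qed.

Lemma coef_eq0 a b : coefU a b = 0 -> coefV a b = 0 ->
  (forall i j, a i j = 0) /\ (forall i j, (i, j) != (ord0, ord0) -> b i j = 0).
Proof.
move=> /matrixP U_eq0 /matrixP V_eq0.
have tauS_neq0 (i : 'I_n) : tau i.+1 != 0 by rewrite tau_neq0 ?ltn_ord.
have interior i j : a i j = 0 /\ b (lift ord0 i) (lift ord0 j) = 0.
  move: (U_eq0 i (lift ord0 j)) (V_eq0 (lift ord0 i) j).
  rewrite !mxE !liftK !lift0 => eqU eqV; apply: lin2_eq0 eqU eqV.
  by rewrite gt_eqF // (_ : _ - _ = pair_det i.+1 j.+1) ?pair_det_gt0 // /pair_det; ring.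
split=> [i j | i j ij_neq0]; first by case: (interior i j).
case: (unliftP ord0 i) => [i' ->|i0]; case: (unliftP ord0 j) => [j' ->|j0].
- by case: (interior i' j').
- move: (U_eq0 i' ord0); rewrite j0 !mxE unlift_none add0r => /eqP.
  by rewrite mulf_eq0 (negPf (tauS_neq0 i')) orbF => /eqP.
- move: (V_eq0 ord0 j'); rewrite i0 !mxE unlift_none add0r => /eqP.
  by rewrite mulf_eq0 (negPf (tauS_neq0 j')) orbF => /eqP.
- by move: ij_neq0; rewrite i0 j0 eqxx.
Qed.

Lemma coef_onto X Y : exists a b, coefU a b = X /\ coefV a b = Y.
Proof.
have tauS_neq0 (i : 'I_n) : tau i.+1 != 0 by rewrite tau_neq0 ?ltn_ord.
pose a (i j : 'I_n) := (tau j.+1 * X i (lift ord0 j) - tau i.+1 * Y (lift ord0 i) j)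
              / pair_det i.+1 j.+1.
pose b (i j : 'I_n.+1) := match unlift ord0 i, unlift ord0 j with
  | Some i', Some j' => (tau i'.+1 * sigma j'.+1 * X i' j + tau j'.+1 * sigma i'.+1 * Y i j')
                        / pair_det i'.+1 j'.+1
  | Some i', None => X i' j / tau i'.+1
  | None, Some j' => Y i j' / tau j'.+1
  | None, None => 0
  end.
exists a, b; split; apply/matrixP => i j; rewrite !mxE /b.
- case: (unliftP ord0 j) => [j' ->|->]; rewrite ?liftK ?unlift_none ?lift0.
    by have := lt0r_neq0 (pair_det_gt0 i j'); rewrite /a /pair_det => ?; field.
  by rewrite add0r divfK.
- case: (unliftP ord0 i) => [i' ->|->]; rewrite ?liftK ?unlift_none ?lift0.
    by have := lt0r_neq0 (pair_det_gt0 i' j); rewrite /a /pair_det => ?; field.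
  by rewrite add0r divfK.
Qed.

End Modes.

Theorem theorem5p1 (R : realType) (n : nat) (hn : (1 <= n)%N) :
  (* (i): n^2 divergence-free eigen-solutions, 1 <= i,j <= n *)
  (forall i j : nat, (1 <= i <= n)%N -> (1 <= j <= n)%N ->
     eigensolution (lam1 R n i j) (U1 R n i j) (V1 R n i j)
     /\ div_free (U1 R n i j) (V1 R n i j)) /\
  (* (ii): (n+1)^2 - 1 eigen-solutions with eigenvalue 0 *)
  (forall i j : nat, (i <= n)%N -> (j <= n)%N -> (i, j) <> (0%N, 0%N) ->
     eigensolution 0 (U0 R n i j) (V0 R n i j)) /\
  (* the 2n(n+1) eigenvectors form a basis: linearly independent ... *)
  (forall (a : 'I_n -> 'I_n -> R) (b : 'I_n.+1 -> 'I_n.+1 -> R),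
     \sum_(i < n) \sum_(j < n) a i j *: U1 R n i.+1 j.+1
       + \sum_(i < n.+1) \sum_(j < n.+1 | (i, j) != (ord0, ord0))
           b i j *: U0 R n i j = 0 ->
     \sum_(i < n) \sum_(j < n) a i j *: V1 R n i.+1 j.+1
       + \sum_(i < n.+1) \sum_(j < n.+1 | (i, j) != (ord0, ord0))
           b i j *: V0 R n i j = 0 ->
     (forall i j, a i j = 0) /\
     (forall i j, (i, j) != (ord0, ord0) -> b i j = 0)) /\
  (* ... and spanning *)
  (forall (X : 'M[R]_(n, n.+1)) (Y : 'M[R]_(n.+1, n)),
     exists (a : 'I_n -> 'I_n -> R) (b : 'I_n.+1 -> 'I_n.+1 -> R),
       X = \sum_(i < n) \sum_(j < n) a i j *: U1 R n i.+1 j.+1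
           + \sum_(i < n.+1) \sum_(j < n.+1 | (i, j) != (ord0, ord0))
               b i j *: U0 R n i j /\
       Y = \sum_(i < n) \sum_(j < n) a i j *: V1 R n i.+1 j.+1
           + \sum_(i < n.+1) \sum_(j < n.+1 | (i, j) != (ord0, ord0))
               b i j *: V0 R n i j).
Proof.
have [C_unit S_unit] := (Cmx_unit R hn, Smx_unit R hn).
have [CT_unit ST_unit] : (Cmx R n)^T \in unitmx /\ (Smx R n)^T \in unitmx.
  by rewrite !unitmx_tr.
split; first exact: div_free_eigensolution.
split; first exact: zero_eigensolution.
split=> [a b | X Y].
  rewrite sumU_coefU sumV_coefV.
  move=> /(mulmx_unit_eq0 ST_unit C_unit) U_eq0 /(mulmx_unit_eq0 CT_unit S_unit) V_eq0.
  exact (coef_eq0 hn U_eq0 V_eq0).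
have [a [b [defX defY]]] := coef_onto hn (invmx (Smx R n)^T *m X *m invmx (Cmx R n))
                                        (invmx (Cmx R n)^T *m Y *m invmx (Smx R n)).
exists a, b; rewrite sumU_coefU sumV_coefV defX defY.
by rewrite !mulmxA !mulmxV // !mul1mx !mulmxKV.
Qed.
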